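(* Let $G$ be a graph with $\delta(G)\ge2$ and $b_{tR}(G)<\infty$. If $G$ has a unique $\gamma_{tR}(G)$-function, then $b_{tR}(G)=1$.
   Context: A TRDF on $G=(V,E)$ is a function $f:V\to\{0,1,2\}$ such that every $v$ with $f(v)=0$ has a neighbor $u$ with $f(u)=2$ and the subgraph induced by $\{v:f(v)>0\}$ has no isolated vertices; $\gamma_{tR}(G)$ is its minimum weight and a $\gamma_{tR}(G)$-function is a TRDF of that weight. $b_{tR}(G)$ is the minimum $|E'|$ such that $G-E'$ has no isolated vertices and $\gamma_{tR}(G-E')>\gamma_{tR}(G)$ ($\infty$ if none). $\delta(G)$ is the minimum degree. *)

(* Finite simple graphs as symmetric irreflexive relations. *)
From mathcomp Require Import all_boot.
Set Implicit Arguments. Unset Strict Implicit. Unset Printing Implicit Defensive.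

Section Defs.
Variable T : finType.

Definition edges (g : rel T) : {set {set T}} :=
  [set [set x; y] | x in T, y in T & g x y].

Definition delE (g : rel T) (E' : {set {set T}}) : rel T :=
  [rel x y | g x y && ([set x; y] \notin E')].

Definition deg (g : rel T) (v : T) : nat := #|[set u | g v u]|.

Definition no_isolated (g : rel T) : bool := [forall v, [exists u, g v u]].

Definition isTRDF (g : rel T) (f : {ffun T -> 'I_3}) : bool :=
  [forall v, ((f v : nat) == 0) ==> [exists u, g v u && ((f u : nat) == 2)]] &&
  [forall v, (0 < f v) ==> [exists u, g v u && (0 < f u)]].

Definition weight (f : {ffun T -> 'I_3}) : nat := \sum_(v : T) (f v : nat).

(* gamma_tR: minimum weight of a TRDF (2|V| is an upper bound for any weight;
   it is only the value used when no TRDF exists, which never matters below). *)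
Definition gammatR (g : rel T) : nat :=
  \big[minn/(2 * #|T|)]_(f : {ffun T -> 'I_3} | isTRDF g f) weight f.

Definition is_gammatR_function (g : rel T) (f : {ffun T -> 'I_3}) : Prop :=
  isTRDF g f /\ weight f = gammatR g.

Definition btR_set (g : rel T) (E' : {set {set T}}) : bool :=
  [&& E' \subset edges g, no_isolated (delE g E') & gammatR g < gammatR (delE g E')].

Definition btR_finite (g : rel T) : Prop := exists E', btR_set g E'.

Definition btR_eq (g : rel T) (b : nat) : Prop :=
  (exists E', btR_set g E' /\ #|E'| = b) /\ (forall E', btR_set g E' -> b <= #|E'|).
End Defs.

(** A unique minimum TRDF [f] must assign [2] to some vertex [u]: otherwise
    [f] has no zero, so it stays a TRDF after any bondage set is deleted and
    [gamma_tR] could never increase.  Lowering [f u] to [1] decreases the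
    weight, so the result is no TRDF; this exhibits a private neighbour [w]
    of [u], with [f w = 0] and [u] its only neighbour labelled [2].  Deleting
    the single edge [uw] isolates no vertex since [delta >= 2], and does not
    lower [gamma_tR]; if [gamma_tR] stayed the same, a minimum TRDF of the
    smaller graph would be a minimum TRDF of [G], hence equal to [f], which
    fails at [w]. *)
From mathcomp Require Import all_boot all_order.
Set Implicit Arguments. Unset Strict Implicit. Unset Printing Implicit Defensive.
Import Order.TTheory.

Section TotalRomanDomination.
Variable T : finType.
Implicit Types (g h : rel T) (f : {ffun T -> 'I_3}).

Lemma weight_le_card f : weight f <= 2 * #|T|.
Proof.
rewrite /weight -sum1_card big_distrr /=.
by apply: leq_sum => v _; rewrite muln1 -ltnS.
Qed.

Lemma gammatR_le_weight g f : isTRDF g f -> gammatR g <= weight f.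
Proof. exact: (@bigmin_le_cond _ nat). Qed.

Lemma gammatR_attained g f0 :
  isTRDF g f0 -> exists2 f, isTRDF g f & weight f = gammatR g.
Proof.
move=> gf0.
have [f gf gammaE] := @eq_bigmin _ nat _ _ _ _ _ gf0 (fun f _ => weight_le_card f).
by exists f; last exact/esym/gammaE.
Qed.

Lemma isTRDF_subrel g h f : subrel h g -> isTRDF h f -> isTRDF g f.
Proof.
move=> hg /andP[/forallP f2 /forallP fpos].
apply/andP; split; apply/forallP => v; apply/implyP.
  case/(implyP (f2 v))/existsP => u /andP[hvu fu].
  by apply/existsP; exists u; rewrite hg.
case/(implyP (fpos v))/existsP => u /andP[hvu fu].
by apply/existsP; exists u; rewrite hg.
Qed.

Lemma isTRDF_pos g f : (forall v, 0 < f v) -> no_isolated g -> isTRDF g f.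
Proof.
move=> fpos /forallP gN; apply/andP; split; apply/forallP => v.
  by rewrite eqn0Ngt fpos.
have /existsP[u guv] := gN v.
by rewrite fpos; apply/existsP; exists u; rewrite guv fpos.
Qed.

Lemma gammatR_attained_no_isolated g :
  no_isolated g -> exists2 f, isTRDF g f & weight f = gammatR g.
Proof.
move=> gN; apply: (@gammatR_attained _ [ffun _ => ord_max]).
by apply: isTRDF_pos gN => v; rewrite ffunE.
Qed.

Lemma gammatR_subrel g h : subrel h g -> no_isolated h -> gammatR g <= gammatR h.
Proof.
move=> hg hN; have [f hf <-] := gammatR_attained_no_isolated hN.
exact/gammatR_le_weight/(isTRDF_subrel hg).
Qed.

Lemma no_isolated_subrel g h : subrel h g -> no_isolated h -> no_isolated g.
Proof.
move=> hg /forallP hN; apply/forallP => v.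
by have /existsP[u hvu] := hN v; apply/existsP; exists u; apply: hg.
Qed.

Lemma btR_set_gt0 g E : btR_set g E -> 0 < #|E|.
Proof.
case/and3P=> _ gEN; rewrite card_gt0; apply: contraTneq => ->.
have g_sub : subrel g (delE g set0) by move=> x y gxy; rewrite /delE /= gxy inE.
rewrite -leqNgt gammatR_subrel //.
by apply: no_isolated_subrel gEN => x y /andP[].
Qed.

Lemma gammatR_function_has_two g f :
  btR_finite g -> is_gammatR_function g f -> exists u, f u = 2 :> nat.
Proof.
move=> [E /and3P[_ gEN gE_gt]] [gf wf].
have [u /eqP fu | no2] := pickP (fun u => (f u : nat) == 2); first by exists u.
suff : gammatR (delE g E) <= gammatR g by rewrite leqNgt gE_gt.
rewrite -wf gammatR_le_weight // isTRDF_pos // => v; rewrite lt0n.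
apply/negP => /(implyP (forallP (proj1 (andP gf)) v)) /existsP[u /andP[_ fu]].
by rewrite no2 in fu.
Qed.

Definition lower_at f u : {ffun T -> 'I_3} :=
  [ffun x => if x == u then inord 1 else f x].

Lemma weight_lower_at f u : f u = 2 :> nat -> weight (lower_at f u) < weight f.
Proof.
move=> fu; rewrite /weight (bigD1 u) // [X in _ < X](bigD1 u) //= fu.
rewrite ffunE eqxx inordK // (eq_bigr (fun v => f v : nat)) ?ltn_add2r // => v.
by move/negbTE=> vu; rewrite ffunE vu.
Qed.

Lemma private_neighbour g f u :
  is_gammatR_function g f -> f u = 2 :> nat ->
  exists w, [/\ f w = 0 :> nat, g w u & forall y, g w y -> f y = 2 :> nat -> y = u].
Proof.
move=> [/andP[/forallP f2 /forallP fpos] wf] fu.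
have not_trdf : ~~ isTRDF g (lower_at f u).
  by apply: contraL (weight_lower_at fu) => /gammatR_le_weight; rewrite -wf -leqNgt.
have f'E x : x != u -> lower_at f u x = f x by move=> /negbTE xu; rewrite ffunE xu.
have f'u : lower_at f u u = 1 :> nat by rewrite ffunE eqxx inordK.
have [w /andP[fw0 no2] {not_trdf}] : exists w, ((lower_at f u w : nat) == 0) &&
    ~~ [exists y, g w y && ((lower_at f u y : nat) == 2)].
  apply/existsP; apply: contraR not_trdf => /existsPn all2.
  apply/andP; split; apply/forallP => v; apply/implyP.
    by move=> fv0; move: (all2 v); rewrite fv0 negbK.
  have -> : 0 < lower_at f u v = (0 < f v).
    by case: (eqVneq v u) => [->|/f'E ->]; rewrite ?f'u ?fu.
  case/(implyP (fpos v))/existsP => y /andP[gvy fy]; apply/existsP; exists y.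
  by rewrite gvy; case: (eqVneq y u) => [->|/f'E ->]; rewrite ?f'u.
have wu : w != u by apply: contraTneq fw0 => ->; rewrite f'u.
have only_u y : g w y -> f y = 2 :> nat -> y = u.
  move=> gwy fy; apply/eqP; apply: contraNT no2 => yu.
  by apply/existsP; exists y; rewrite gwy f'E // fy.
rewrite f'E // in fw0; exists w; split=> //; first exact/eqP.
have /existsP[y /andP[gwy /eqP fy]] := implyP (f2 w) fw0.
by rewrite -(only_u y).
Qed.

Lemma edge_in_edges g x y : symmetric g -> g y x -> [set x; y] \in edges g.
Proof. by move=> gsym gyx; apply/imset2P; exists x y; rewrite // inE gsym. Qed.

Lemma no_isolated_delE1 g x y :
  irreflexive g -> (forall v, 2 <= deg g v) -> no_isolated (delE g [set [set x; y]]).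
Proof.
move=> girr gdeg; apply/forallP => v; apply/existsP.
have /card_gt1P[y1 [y2 []]] := gdeg v; rewrite !inE => gv1 gv2 y12.
have [e1|ne1] := eqVneq [set v; y1] [set x; y].
  2: by exists y1; rewrite /delE /= gv1 inE.
exists y2; rewrite /delE /= gv2 inE -e1; apply: contraNneq y12 => e2.
have : y2 \in [set v; y1] by rewrite -e2 !inE eqxx orbT.
by rewrite !inE => /orP[/eqP v2|/eqP ->]; first by rewrite v2 girr in gv2.
Qed.

Lemma not_isTRDF_delE_private g f u w :
  f w = 0 :> nat -> (forall y, g w y -> f y = 2 :> nat -> y = u) ->
  ~~ isTRDF (delE g [set [set u; w]]) f.
Proof.
move=> fw only_u; apply/negP => /andP[/forallP f2 _].
have /existsP[y /andP[/andP[gwy ny] /eqP fy]] := implyP (f2 w) (introT eqP fw).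
by move: ny; rewrite (only_u y) // !inE setUC eqxx.
Qed.

End TotalRomanDomination.

Theorem mainTheorem14 (T : finType) (g : rel T) :
  symmetric g -> irreflexive g ->
  (forall v : T, 2 <= deg g v) ->
  btR_finite g ->
  (exists! f : {ffun T -> 'I_3}, is_gammatR_function g f) ->
  btR_eq g 1.
Proof.
move=> gsym girr gdeg gfin [f [fmin funiq]].
split; last by move=> E /btR_set_gt0.
have [u fu] := gammatR_function_has_two gfin fmin.
have [w [fw gwu only_u]] := private_neighbour fmin fu.
set E := [set [set u; w]].
have sub : subrel (delE g E) g by move=> x y /andP[].
have EN : no_isolated (delE g E) := no_isolated_delE1 u w girr gdeg.
exists E; split; last exact: cards1.
apply/and3P; split; [by rewrite sub1set edge_in_edges | exact: EN |].
rewrite ltn_neqAle gammatR_subrel // andbT; apply/eqP => gamma_eq.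
have [h hE wh] := gammatR_attained_no_isolated EN.
have fh : f = h.
  by apply: funiq; split; [exact: isTRDF_subrel hE | rewrite wh gamma_eq].
by move: hE; rewrite -fh; apply/negP/not_isTRDF_delE_private.
Qed.
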